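(* There exists $\Delta_0$ such that for every simple graph $G=(V,E)$ of maximum degree $\Delta\ge\Delta_0$ there is a set $F\subseteq E$ such that every vertex $v$ with $d(v)\ge\Delta/3$ is incident with at least two edges of $F$, and every vertex of $G$ is incident with at most $15\ln\Delta$ edges of $F$.
   Context: $G$ is a simple graph and $d(v)$ denotes the degree of $v$ in $G$. *)

From mathcomp Require Import all_boot.
From Stdlib Require Import Reals.
Set Implicit Arguments. Unset Strict Implicit. Unset Printing Implicit Defensive.

Definition simple_graph (T : finType) (e : rel T) : Prop :=
  symmetric e /\ irreflexive e.

Definition deg (T : finType) (e : rel T) (v : T) : nat := #|[set u | e v u]|.

Definition maxdeg (T : finType) (e : rel T) : nat := \max_(v : T) deg e v.

Definition edge_subset (T : finType) (e f : rel T) : Prop :=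
  symmetric f /\ (forall u v, f u v -> e u v).

From mathcomp Require Import all_boot zify.
From Stdlib Require Import Reals Lra.
Set Implicit Arguments. Unset Strict Implicit. Unset Printing Implicit Defensive.

(* No probability is needed: the bound 15 ln Δ is beaten by the constant 10.
   Every vertex v with d(v) >= Δ/3 splits its neighbourhood into two halves of
   size at least Δ/7 and picks one neighbour in each half; F is the set of picked
   edges.  A vertex lies in the halves of at most Δ vertices, so the picks can be
   made with every vertex picked at most Δ/(Δ/7) + 1 <= 8 times, whence every
   F-degree is at most 2 + 8.
   Such picks exist for any jobs-to-machines problem: take an assignment
   minimising the sum of squared loads.  Along a path of possible moves starting
   at x the load drops by at most one (else shifting the jobs along the path would
   lower the potential), so if R is the set reachable from x, double counting the
   jobs assigned into R gives d * load x * |R| <= (D + d) * |R|. *)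

Section LoadBalancing.
Variables (J V : finType) (allowed : J -> {set V}).

Definition load (a : {ffun J -> V}) x := #|[set j | a j == x]|.
Definition admissible (a : {ffun J -> V}) := [forall j, a j \in allowed j].
Definition load_potential (a : {ffun J -> V}) := \sum_x load a x * load a x.
Definition shiftable (a : {ffun J -> V}) x y :=
  [exists j, (a j == x) && (y \in allowed j)].
Definition reassign (a : {ffun J -> V}) j y := [ffun i => if i == j then y else a i].

Lemma load_reassign a j y x :
  load (reassign a j y) x + (a j == x) = load a x + (y == x).
Proof.
rewrite /load (cardsD1 j [set i | _]) (cardsD1 j [set i | a i == x]) !inE ffunE eqxx.
have -> : [set i | reassign a j y i == x] :\ j = [set i | a i == x] :\ j.
  by apply/setP=> i; rewrite !inE ffunE; case: (i =P j).
lia.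
Qed.

Lemma shift_along_path a u p :
  admissible a -> path (shiftable a) u p -> uniq (u :: p) ->
  exists a', [/\ admissible a',
    forall x, load a' x + (x == u) = load a x + (x == last u p) &
    forall j, a j \notin u :: p -> a' j = a j].
Proof.
elim: p u => [|x1 p IH] u adm_a; first by exists a.
rewrite /= => /andP[/existsP[j /andP[/eqP aj_u x1_ok]] pth] /andP[u_p uniq_p].
have [a1 [adm_a1 load_a1 a1_eq]] := IH x1 adm_a pth uniq_p.
have a1j : a1 j = u by rewrite a1_eq // aj_u.
exists (reassign a1 j x1); split.
- apply/forallP=> i; rewrite ffunE; case: (i =P j) => [->|_] //.
  exact: (forallP adm_a1).
- move=> x; have := load_reassign a1 j x1 x; have := load_a1 x.
  by rewrite a1j !(eq_sym x); lia.
- move=> i; rewrite in_cons negb_or => /andP[ai_u ai_p]; rewrite ffunE.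
  case: (i =P j) => [ij|_]; last exact: a1_eq.
  by rewrite ij aj_u eqxx in ai_u.
Qed.

Lemma load_potential_lt a a' u w :
  (forall x, load a' x + (x == u) = load a x + (x == w)) ->
  load a w + 2 <= load a u -> load_potential a' < load_potential a.
Proof.
move=> load_a' uw_gap.
have /negPf neq_uw : u != w by apply: contraTneq uw_gap => ->; lia.
have split_uw b : load_potential b = load b u * load b u + load b w * load b w +
    \sum_(x | (x != u) && (x != w)) load b x * load b x.
  by rewrite /load_potential (bigD1 u) //= (bigD1 w) 1?eq_sym ?neq_uw //= addnA.
rewrite !split_uw.
have -> : \sum_(x | (x != u) && (x != w)) load a' x * load a' x =
          \sum_(x | (x != u) && (x != w)) load a x * load a x.
  apply: eq_bigr => x /andP[/negPf xu /negPf xw].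
  by have := load_a' x; rewrite xu xw !addn0 => ->.
have := load_a' u; have := load_a' w; rewrite !eqxx neq_uw eq_sym neq_uw ltn_add2r.
nia.
Qed.

Lemma load_le_reachable a x w :
  admissible a -> (forall a', admissible a' -> load_potential a <= load_potential a') ->
  connect (shiftable a) x w -> load a x <= (load a w).+1.
Proof.
move=> adm_a a_min /connectP[p pth ->].
case: (shortenP pth) => q pth_q uniq_q _.
have [a' [adm_a' load_a' _]] := shift_along_path adm_a pth_q uniq_q.
rewrite leqNgt; apply/negP => gap.
by have := a_min a' adm_a'; rewrite leqNgt (load_potential_lt load_a') //; lia.
Qed.

Lemma sum_load_in a (R : {set V}) :
  \sum_(w in R) load a w = #|[set j | a j \in R]|.
Proof.
rewrite -sum1_card (partition_big a (mem R)) => [|j]; last by rewrite inE.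
apply: eq_bigr => w wR; rewrite /load -sum1_card; apply: eq_bigl => j.
by rewrite !inE; case: eqP => [->|]; rewrite ?wR ?andbF.
Qed.

Variables (d D : nat).
Hypothesis allowed_large : forall j, d <= #|allowed j|.
Hypothesis allowed_sparse : forall w, #|[set j | w \in allowed j]| <= D.

Lemma load_closed_le a (R : {set V}) :
  (forall j, a j \in R -> allowed j \subset R) ->
  d * #|[set j | a j \in R]| <= #|R| * D.
Proof.
move=> R_closed; rewrite mulnC -sum_nat_const -sum_nat_const.
apply: (@leq_trans (\sum_(j in [set j | a j \in R]) \sum_(w in R) (w \in allowed j))).
  apply: leq_sum => j; rewrite inE => /R_closed/subsetP allowed_R.
  rewrite (leq_trans (allowed_large j)) // -sum1_card big_mkcond [leqRHS]big_mkcond.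
  by apply: leq_sum => w _; case: (boolP (w \in allowed j)) => [/allowed_R ->|]; case: (w \in R).
rewrite exchange_big; apply: leq_sum => w _.
apply: leq_trans (allowed_sparse w); rewrite -sum1_card big_mkcond [leqRHS]big_mkcond.
by apply: leq_sum => j _; rewrite !inE; case: (_ \in R); case: (w \in allowed j).
Qed.

Lemma balanced_assignment :
  0 < d -> exists a, admissible a /\ forall x, d * load a x <= D + d.
Proof.
move=> d_gt0.
have [a0 adm_a0] : exists a, admissible a.
  have /fin_all_exists[g gP] j : exists w, w \in allowed j.
    by apply/set0Pn; rewrite -card_gt0 (leq_trans d_gt0).
  by exists (finfun g); apply/forallP => j; rewrite ffunE.
case: (arg_minnP load_potential adm_a0) => a adm_a a_min.
exists a; split => // x.
pose R := [set w | connect (shiftable a) x w].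
have R_closed j : a j \in R -> allowed j \subset R.
  rewrite inE => xaj; apply/subsetP => w wj; rewrite inE (connect_trans xaj) //.
  by apply: connect1; apply/existsP; exists j; rewrite eqxx.
have R_gt0 : 0 < #|R| by apply/card_gt0P; exists x; rewrite inE connect0.
have load_x : load a x * #|R| <= #|[set j | a j \in R]| + #|R|.
  rewrite -sum_load_in mulnC -sum_nat_const -sum1_card -big_split leq_sum // => w.
  rewrite inE => xw; apply: leq_trans (load_le_reachable adm_a a_min xw) _.
  by rewrite -addn1.
rewrite -(leq_pmul2r R_gt0) -mulnA (leq_trans (leq_mul (leqnn d) load_x)) //.
by rewrite mulnDr mulnDl leq_add2r [D * _]mulnC load_closed_le.
Qed.

End LoadBalancing.

Definition symmetrize (T : Type) (r : rel T) : rel T := fun u w => r u w || r w u.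

Lemma symmetrize_sym (T : Type) (r : rel T) : symmetric (symmetrize r).
Proof. by move=> u w; rewrite /symmetrize orbC. Qed.

Lemma deg_symmetrize_le (T : finType) (r : rel T) v :
  deg (symmetrize r) v <= #|[set w | r v w]| + #|[set w | r w v]|.
Proof.
rewrite /deg; apply: leq_trans (leq_card_setU _ _); apply: subset_leq_card.
by apply/subsetP => w; rewrite !inE.
Qed.

Lemma symmetrize_sub (T : Type) (r s : rel T) :
  symmetric s -> subrel r s -> subrel (symmetrize r) s.
Proof. by move=> s_sym rs u w /orP[/rs|/rs]; rewrite // s_sym. Qed.

Section ChoiceRelation.
Variables (J T : finType) (owner a : J -> T).

Definition chosen u w := [exists j, (owner j == u) && (a j == w)].

Lemma card_chosen_by u : #|[set w | chosen u w]| <= #|[set j | owner j == u]|.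
Proof.
apply: leq_trans (leq_imset_card a _); apply: subset_leq_card; apply/subsetP => w.
by rewrite inE => /existsP[j /andP[uj /eqP <-]]; apply: imset_f; rewrite inE.
Qed.

Lemma chosen_sub (r : rel T) : (forall j, r (owner j) (a j)) -> subrel chosen r.
Proof. by move=> r_oa u w /existsP[j /andP[/eqP <- /eqP <-]]. Qed.

Lemma card_choosing w : #|[set u | chosen u w]| <= #|[set j | a j == w]|.
Proof.
apply: leq_trans (leq_imset_card owner _); apply: subset_leq_card; apply/subsetP => u.
by rewrite inE => /existsP[j /andP[/eqP <- aj]]; apply: imset_f; rewrite inE.
Qed.

End ChoiceRelation.

Section NeighbourHalves.
Variables (T : finType) (e : rel T).

Definition nbhd v : {set T} := [set u | e v u].

Definition half (b : bool) v : {set T} :=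
  let s := enum (nbhd v) in let k := deg e v %/ 2 in
  [set u in if b then drop k s else take k s].

Lemma half_sub b v : half b v \subset nbhd v.
Proof.
apply/subsetP => u; rewrite inE -[u \in nbhd v]mem_enum.
by case: b => [/mem_drop|/mem_take].
Qed.

Lemma halves_disjoint v : [disjoint half false v & half true v].
Proof.
rewrite -setI_eq0; apply/eqP/setP => u; rewrite !inE.
have := enum_uniq (mem (nbhd v)).
rewrite -[X in uniq X](cat_take_drop (deg e v %/ 2)) cat_uniq => /and3P[_ /hasPn dis _].
by apply/negP => /andP[u1 u2]; have := dis u u2; rewrite u1.
Qed.

Lemma half_side_inj b b' v w : w \in half b v -> w \in half b' v -> b = b'.
Proof.
have dis := disjointFr (halves_disjoint v) (x := w).
by case: b b' => -[] // w1 w2; [rewrite (dis w2) in w1 | rewrite (dis w1) in w2].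
Qed.

Lemma half_card_ge b v : deg e v %/ 2 <= #|half b v|.
Proof.
have size_enum : size (enum (nbhd v)) = deg e v by rewrite -cardE.
rewrite cardsE (card_uniqP _); last by case: b; rewrite ?drop_uniq ?take_uniq ?enum_uniq.
by case: b; rewrite ?size_drop ?size_take size_enum; [lia|case: ltnP; lia].
Qed.

Hypothesis e_sym : symmetric e.

Lemma card_half_owners (P : pred T) w :
  #|[set j : {v | P v} * bool | w \in half j.2 (val j.1)]| <= deg e w.
Proof.
rewrite -(card_in_imset (f := fun j => val j.1)).
  apply: subset_leq_card; apply/subsetP => u /imsetP[j wj ->]; rewrite in_set in wj.
  by have := subsetP (half_sub _ _) w wj; rewrite !inE e_sym.
move=> [v b] [v' b']; rewrite [(v, b) \in _]in_set [(v', b') \in _]in_set /=.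
by move=> wb wb' /val_inj vv; subst v'; rewrite (half_side_inj wb wb').
Qed.

End NeighbourHalves.

Lemma card_owned_le2 (T : finType) (P : pred T) v :
  #|[set j : {u | P u} * bool | val j.1 == v]| <= 2.
Proof.
rewrite -(card_in_imset (f := snd)); first by rewrite (leq_trans (max_card _)) ?card_bool.
move=> [u b] [u' b'] /[!inE] /= /eqP uv /eqP u'v bb'.
by congr pair => //; apply: val_inj; exact: etrans uv (esym u'v).
Qed.

Section HalfChoiceGraph.
Variables (T : finType) (e : rel T) (P : pred T).
Variable a : {ffun {v | P v} * bool -> T}.
Hypothesis a_half : forall j, a j \in half e j.2 (val j.1).

Definition choice_graph := symmetrize (chosen (fun j => val j.1) a).

Lemma choice_graph_sub : symmetric e -> subrel choice_graph e.
Proof.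
move=> e_sym; apply: symmetrize_sub e_sym (chosen_sub _) => j.
by have := subsetP (half_sub e _ _) _ (a_half j); rewrite inE.
Qed.

Lemma two_le_deg_choice_graph v : P v -> 2 <= deg choice_graph v.
Proof.
move=> Pv; pose j b : {u | P u} * bool := (exist _ v Pv, b).
have chosen_j b : a (j b) \in [set w | choice_graph v w].
  by rewrite inE; apply/orP; left; apply/existsP; exists (j b); rewrite !eqxx.
have /negPf a_neq : a (j false) != a (j true).
  apply/eqP => a_eq; have := half_side_inj (a_half (j false)).
  by rewrite a_eq => /(_ _ (a_half (j true))).
apply: leq_trans (subset_leq_card (_ : [set a (j false); a (j true)] \subset _)).
  by rewrite cards2 a_neq.
by rewrite subUset !sub1set !chosen_j.
Qed.

Lemma deg_choice_graph_le v : deg choice_graph v <= 2 + load a v.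
Proof.
apply: leq_trans (deg_symmetrize_le _ _) (leq_add _ (card_choosing _ _ _)).
exact: leq_trans (card_chosen_by _ _ _) (card_owned_le2 _ _).
Qed.

End HalfChoiceGraph.

Lemma deg_le_maxdeg (T : finType) (e : rel T) v : deg e v <= maxdeg e.
Proof. exact: leq_bigmax. Qed.

Lemma one_lt_ln_INR n : 3 < n -> (1 < ln (INR n))%R.
Proof.
move=> n_gt3; rewrite -[X in (X < _)%R](ln_exp 1); apply: ln_increasing (exp_pos 1) _.
apply: Rle_lt_trans exp_le_3 _; have -> : 3%R = INR 3 by rewrite /=; lra.
by apply: lt_INR; apply/ltP.
Qed.

Theorem mainTheorem3 :
  exists Delta0 : nat,
    forall (T : finType) (e : rel T),
      simple_graph e ->
      Delta0 <= maxdeg e ->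
      exists f : rel T,
        edge_subset e f /\
        (forall v : T, maxdeg e <= 3 * deg e v -> 2 <= deg f v) /\
        (forall v : T, (INR (deg f v) <= 15 * ln (INR (maxdeg e)))%R).
Proof.
exists 70 => T e [e_sym _] M_ge70; set M := maxdeg e in M_ge70 *.
pose allowed (j : {v | M <= 3 * deg e v} * bool) := half e j.2 (val j.1).
have allowed_large j : M %/ 7 <= #|allowed j|.
  by apply: leq_trans (half_card_ge e _ _); case: j => -[v /= high_v] _; lia.
have allowed_sparse w : #|[set j | w \in allowed j]| <= M.
  exact: leq_trans (card_half_owners e_sym _ w) (deg_le_maxdeg e w).
have [|a [/forallP a_half load_a]] := balanced_assignment allowed_large allowed_sparse.
  by lia.
exists (choice_graph a); split; [split|split].
- exact: symmetrize_sym.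
- exact: choice_graph_sub a_half e_sym.
- exact: two_le_deg_choice_graph a_half.
- move=> v; have load_le8 : load a v <= 8 by have := load_a v; nia.
  have deg_le10 := leq_trans (deg_choice_graph_le a v) (leq_add (leqnn 2) load_le8).
  have ln_gt1 : (1 < ln (INR M))%R by apply: one_lt_ln_INR; lia.
  have := le_INR _ _ (elimT leP deg_le10); rewrite [INR 10]/=; lra.
Qed.
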